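(* Let $I:\mathcal{G}\to\mathcal{V}$ be a morphism of rings with several objects such that the induced adjoint pair $(I^*,I_* )$, $I^*:\mathrm{Mod}(\mathcal{G})\to\mathrm{Mod}(\mathcal{V})$, $I_*:\mathrm{Mod}(\mathcal{V})\to\mathrm{Mod}(\mathcal{G})$, is a localization (i.e. $I^*$ is exact and $I_*$ is fully faithful). Then $I^*$ and $I_*$ are mutually inverse equivalences of categories if and only if $\mathcal{G}(-,G)$ is a $\operatorname{Ker} I^*$-closed $\mathcal{G}$-module for all $G\in\mathcal{G}$.
   Context: All categories are preadditive and all functors are additive. A ring with several objects is a small preadditive category. $\mathrm{Mod}(\mathcal{G})$ is the category of additive functors $\mathcal{G}^{op}\to\mathrm{Ab}$. $I_*Y=Y\circ I$ is the restriction functor and $I^*$ is its left adjoint, the colimit-preserving functor with $I^*\mathcal{G}(-,G)=\mathcal{V}(-,IG)$. $\operatorname{Ker} I^*$ is the full subcategory of modules annihilated by $I^*$ (a localizing subcategory, since $I^*$ is exact and colimit-preserving). For a localizing subcategory $\mathcal{L}$, a module $X$ is $\mathcal{L}$-closed if $\mathrm{Hom}(L,X)=0=\mathrm{Ext}^1(L,X)$ for all $L\in\mathcal{L}$. *)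

From HB Require Import structures.
From mathcomp Require Import all_boot all_algebra.
Unset Implicit Arguments.
Unset Strict Implicit.
Unset Printing Implicit Defensive.
Import GRing.Theory.
Local Open Scope ring_scope.

(* A ring with several objects: a small preadditive category.
   [pcomp g f] is the composite g o f. *)
Record PreaddCat := {
  pobj : Type;
  phom : pobj -> pobj -> zmodType;
  pcomp : forall a b c : pobj, phom b c -> phom a b -> phom a c;
  pid : forall a : pobj, phom a a;
  pcompDl : forall a b c (g g' : phom b c) (f : phom a b),
      pcomp a b c (g + g') f = pcomp a b c g f + pcomp a b c g' f;
  pcompDr : forall a b c (g : phom b c) (f f' : phom a b),
      pcomp a b c g (f + f') = pcomp a b c g f + pcomp a b c g f';
  pcompA : forall a b c d (h : phom c d) (g : phom b c) (f : phom a b),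
      pcomp a c d h (pcomp a b c g f) = pcomp a b d (pcomp b c d h g) f;
  pcomp1l : forall a b (f : phom a b), pcomp a b b (pid b) f = f;
  pcomp1r : forall a b (f : phom a b), pcomp a a b f (pid a) = f
}.

Record AddFunctor (G V : PreaddCat) := {
  fobj : pobj G -> pobj V;
  fmap : forall a b, phom G a b -> phom V (fobj a) (fobj b);
  fmapD : forall a b (f f' : phom G a b), fmap a b (f + f') = fmap a b f + fmap a b f';
  fmap1 : forall a, fmap a a (pid G a) = pid V (fobj a);
  fmapM : forall a b c (g : phom G b c) (f : phom G a b),
      fmap a c (pcomp G a b c g f) = pcomp V _ _ _ (fmap b c g) (fmap a b f)
}.
Arguments fmap {G V} _ {a b}.
Arguments fobj {G V} _ _.

(* A G-module: an additive functor G^op -> Ab.  [mact f] is X(f) : X b -> X a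
   for f : a -> b. *)
Record Module (G : PreaddCat) := {
  mcar : pobj G -> zmodType;
  mact : forall a b : pobj G, phom G a b -> mcar b -> mcar a;
  mactDf : forall a b (f f' : phom G a b) (x : mcar b),
      mact a b (f + f') x = mact a b f x + mact a b f' x;
  mactD : forall a b (f : phom G a b) (x y : mcar b),
      mact a b f (x + y) = mact a b f x + mact a b f y;
  mact1 : forall a (x : mcar a), mact a a (pid G a) x = x;
  mactM : forall a b c (f : phom G a b) (g : phom G b c) (x : mcar c),
      mact a c (pcomp G a b c g f) x = mact a b f (mact b c g x)
}.
Arguments mcar {G} _ _.
Arguments mact {G} _ {a b} _ _.

Record ModMor (G : PreaddCat) (M N : Module G) := {
  mmap : forall a, mcar M a -> mcar N a;
  mmapD : forall a (x y : mcar M a), mmap a (x + y) = mmap a x + mmap a y;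
  mmapN : forall a b (f : phom G a b) (x : mcar M b),
      mmap a (mact M f x) = mact N f (mmap b x)
}.
Arguments mmap {G M N} _ _ _.
Arguments ModMor {G} _ _.
Set Implicit Arguments.

Definition restr (G V : PreaddCat) (I : AddFunctor G V) (Y : Module V) : Module G.
Proof.
refine (Build_Module G (fun a => mcar Y (fobj I a))
          (fun a b f x => mact Y (fmap I f) x) _ _ _ _).
- by move=> a b f f' x /=; rewrite fmapD mactDf.
- by move=> a b f x y /=; rewrite mactD.
- by move=> a x /=; rewrite fmap1 mact1.
- by move=> a b c f g x /=; rewrite fmapM mactM.
Defined.

Definition representable (G : PreaddCat) (g : pobj G) : Module G.
Proof.
refine (Build_Module G (fun a => phom G a g)
          (fun a b f h => pcomp G a b g h f) _ _ _ _).
- by move=> a b f f' x /=; rewrite pcompDr.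
- by move=> a b f x y /=; rewrite pcompDl.
- by move=> a x /=; rewrite pcomp1r.
- by move=> a b c f h x /=; rewrite pcompA.
Defined.

Definition is_iso (G : PreaddCat) (M N : Module G) (p : ModMor M N) : Prop :=
  exists q : ModMor N M,
    (forall a x, mmap q a (mmap p a x) = x) /\
    (forall a y, mmap p a (mmap q a y) = y).

Definition short_exact (G : PreaddCat) (A B C : Module G)
    (f : ModMor A B) (g : ModMor B C) : Prop :=
  forall a,
    injective (mmap f a) /\
    (forall z : mcar C a, exists y, mmap g a y = z) /\
    (forall y : mcar B a, mmap g a y = 0 <-> exists x, mmap f a x = y).

Definition is_left_adjoint (G V : PreaddCat) (I : AddFunctor G V)
    (F : Module G -> Module V)
    (Fmap : forall M N : Module G, ModMor M N -> ModMor (F M) (F N))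
    (eta : forall M : Module G, ModMor M (restr I (F M))) : Prop :=
  (forall (M N : Module G) (f : ModMor M N) a x,
      mmap (eta N) a (mmap f a x) = mmap (Fmap M N f) (fobj I a) (mmap (eta M) a x))
  /\
  (forall (M : Module G) (Y : Module V) (phi : ModMor M (restr I Y)),
      exists psi : ModMor (F M) Y,
        (forall a x, mmap psi (fobj I a) (mmap (eta M) a x) = mmap phi a x) /\
        (forall psi' : ModMor (F M) Y,
            (forall a x, mmap psi' (fobj I a) (mmap (eta M) a x) = mmap phi a x) ->
            forall b y, mmap psi' b y = mmap psi b y)).

Definition exact_functor (G V : PreaddCat) (F : Module G -> Module V)
    (Fmap : forall M N : Module G, ModMor M N -> ModMor (F M) (F N)) : Prop :=
  forall (A B C : Module G) (f : ModMor A B) (g : ModMor B C),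
    short_exact f g -> short_exact (Fmap A B f) (Fmap B C g).

Definition restr_fully_faithful (G V : PreaddCat) (I : AddFunctor G V) : Prop :=
  forall Y Y' : Module V,
    (forall psi psi' : ModMor Y Y',
        (forall a x, mmap psi (fobj I a) x = mmap psi' (fobj I a) x) ->
        forall b y, mmap psi b y = mmap psi' b y) /\
    (forall phi : ModMor (restr I Y) (restr I Y'),
        exists psi : ModMor Y Y', forall a x, mmap psi (fobj I a) x = mmap phi a x).

(* Ker I^* : modules annihilated by F. *)
Definition in_Ker (G V : PreaddCat) (F : Module G -> Module V) (M : Module G) : Prop :=
  forall b (y : mcar (F M) b), y = 0.

(* L-closed: Hom(L, X) = 0 and Ext^1(L, X) = 0 (Yoneda Ext: every extension
   0 -> X -> E -> L -> 0 splits) for all L in the subcategory. *)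
Definition closed_wrt (G : PreaddCat) (Lsub : Module G -> Prop) (X : Module G) : Prop :=
  forall L : Module G, Lsub L ->
    (forall (phi : ModMor L X) a x, mmap phi a x = 0) /\
    (forall (E : Module G) (f : ModMor X E) (g : ModMor E L),
        short_exact f g ->
        exists s : ModMor L E, forall a x, mmap g a (mmap s a x) = x).

Definition adj_equivalence (G V : PreaddCat) (I : AddFunctor G V)
    (F : Module G -> Module V)
    (eta : forall M : Module G, ModMor M (restr I (F M))) : Prop :=
  (forall M : Module G, is_iso (eta M)) /\
  (forall Y : Module V, exists eps : ModMor (F (restr I Y)) Y,
      is_iso eps /\
      forall a y, mmap eps (fobj I a) (mmap (eta (restr I Y)) a y) = y).

Arguments restr {G V} _ _.
Arguments representable {G} _.
Arguments is_left_adjoint {G V} _ _ _ _.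
Arguments exact_functor {G V} _ _.
Arguments restr_fully_faithful {G V} _.
Arguments in_Ker {G V} _ _.
Arguments closed_wrt {G} _ _.
Arguments adj_equivalence {G V} _ _ _.

(* When the unit is an isomorphism, every module killed by I^* is zero, so every module is
   closed.  Conversely, closedness of X makes the unit eta_X injective (its kernel is killed
   by I^* and maps to X) and surjective (its cokernel is killed by I^* because I_* is fully
   faithful, the extension X -> I_*I^*X -> coker splits, and a module killed by I^* has no
   nonzero map into a restricted module).  Applied to the representables G(-,c), this shows
   I^* has no nonzero kernel objects: if L is killed by I^* and x in L(a), let K be the kernel
   of the Yoneda map G(-,a) -> L.  Its image is a submodule of L, so I^*K -> I^*G(-,a) is
   onto; but I^*K lands in the largest V-submodule of I^*G(-,a) whose restriction lies in
   eta(K) (bijectivity of eta on representables makes eta(K) stable under V-morphisms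
   between objects I c).  Hence eta(id_a) lies in eta(K(a)), so id_a in K and x = 0.  Then
   every module is closed, all units are isomorphisms, and the counit is always one. *)

From HB Require Import structures.
From mathcomp Require Import all_boot all_algebra.
From mathcomp Require Import boolp.
Import GRing.Theory.
Local Open Scope ring_scope.
Local Open Scope quotient_scope.

Section AdditiveMaps.
Variable G : PreaddCat.

Lemma mact_is_zmod_morphism (M : Module G) a b (f : phom G a b) :
  zmod_morphism (mact M f).
Proof. by move=> x y; apply/eqP; rewrite eq_sym subr_eq -mactD subrK. Qed.

HB.instance Definition _ (M : Module G) a b (f : phom G a b) :=
  GRing.isZmodMorphism.Build _ _ (@mact G M a b f) (mact_is_zmod_morphism M a b f).

Lemma mmap_is_zmod_morphism (M N : Module G) (p : ModMor M N) a :
  zmod_morphism (mmap p a).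
Proof. by move=> x y; apply/eqP; rewrite eq_sym subr_eq -mmapD subrK. Qed.

HB.instance Definition _ (M N : Module G) (p : ModMor M N) a :=
  GRing.isZmodMorphism.Build _ _ (@mmap G M N p a) (mmap_is_zmod_morphism M N p a).

End AdditiveMaps.

Section Morphisms.
Context {G : PreaddCat}.
Implicit Types M N P : Module G.

Definition mor_id M : ModMor M M :=
  @Build_ModMor G M M (fun a x => x) (fun _ _ _ => erefl) (fun _ _ _ _ => erefl).

Definition mor0 M N : ModMor M N.
Proof.
by refine (@Build_ModMor G M N (fun a x => 0) _ _) => *; rewrite ?addr0 ?raddf0.
Defined.

Definition mor_comp {M N P} (p : ModMor M N) (q : ModMor N P) : ModMor M P.
Proof.
by refine (@Build_ModMor G M P (fun a x => mmap q a (mmap p a x)) _ _) => *;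
  rewrite ?mmapD ?mmapN.
Defined.

Definition yoneda_mor {M a} (x : mcar M a) : ModMor (representable a) M.
Proof.
by refine (@Build_ModMor G (representable a) M (fun c f => mact M f x) _ _) => *;
  rewrite /= ?mactDf ?mactM.
Defined.

Lemma bij_iso {M N} (p : ModMor M N) :
  (forall a, injective (mmap p a)) -> (forall a y, exists x, mmap p a x = y) ->
  is_iso p.
Proof.
move=> p_inj p_surj; pose inv a y := projT1 (cid (p_surj a y)).
have invK a y : mmap p a (inv a y) = y by rewrite /inv; case: cid.
have invD a y y' : inv a (y + y') = inv a y + inv a y'.
  by apply: (p_inj a); rewrite mmapD !invK.
have invN a b (f : phom G a b) y : inv a (mact N f y) = mact M f (inv b y).
  by apply: (p_inj a); rewrite mmapN !invK.
exists (@Build_ModMor G N M inv invD invN); split=> a x //=.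
by apply: p_inj; rewrite invK.
Qed.

End Morphisms.

Definition restr_mor {G V : PreaddCat} (I : AddFunctor G V) {Y Y' : Module V}
    (p : ModMor Y Y') : ModMor (restr I Y) (restr I Y').
Proof.
refine (@Build_ModMor G (restr I Y) (restr I Y') (fun a => mmap p (fobj I a)) _ _)
  => *; by rewrite /= ?mmapD ?mmapN.
Defined.

Record submodule G (M : Module G) := Submodule {
  smem : forall a, mcar M a -> Prop;
  smem0 : forall a, smem a 0;
  smemB : forall a x y, smem a x -> smem a y -> smem a (x - y);
  smem_act : forall a b (f : phom G a b) x, smem b x -> smem a (mact M f x)
}.
Arguments submodule {G} M.
Arguments Submodule {G M}.
Arguments smem {G M} s a x.
Arguments smem0 {G M} s a.
Arguments smemB {G M} s {a x y}.
Arguments smem_act {G M} s {a b} f {x}.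

Section SubQuot.
Context {G : PreaddCat} {M : Module G} (S : submodule M).

Definition smem_pred a : {pred mcar M a} := fun x => `[< smem S a x >].

Lemma smem_predP {a} x : reflect (smem S a x) (x \in smem_pred a).
Proof. exact: asboolP. Qed.

Lemma smem_pred_closed a : zmod_closed (smem_pred a).
Proof.
split=> [|x y /smem_predP Sx /smem_predP Sy]; apply/smem_predP.
  exact: smem0.
exact: smemB.
Qed.

HB.instance Definition _ a :=
  GRing.isZmodClosed.Build _ (smem_pred a) (smem_pred_closed a).

Record subcar a := SubElt { subval : mcar M a; _ : subval \in smem_pred a }.

HB.instance Definition _ a := [isSub for @subval a].
HB.instance Definition _ a := [Choice of subcar a by <:].
HB.instance Definition _ a := [SubChoice_isSubZmodule of subcar a by <:].

Lemma subval_act {a b} (f : phom G a b) (x : subcar b) :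
  mact M f (val x) \in smem_pred a.
Proof. by apply/smem_predP/smem_act/smem_predP/valP. Qed.

Definition submod : Module G.
Proof.
refine (@Build_Module G subcar (fun a b f x => SubElt a _ (subval_act f x)) _ _ _ _)
  => *; apply: val_inj; rewrite /= ?SubK ?mactDf ?raddfD ?mact1 ?mactM //.
Defined.

Definition sub_incl : ModMor submod M :=
  @Build_ModMor G submod M (fun a => val) (fun _ _ _ => erefl) (fun _ _ _ _ => erefl).

Lemma sub_incl_inj a : injective (mmap sub_incl a).
Proof. exact: val_inj. Qed.

Definition quotcar a : zmodType := Quotient.quot (smem_pred a).

Lemma pi_quot_eq {a} (x y : mcar M a) :
  \pi_(quotcar a) x = \pi_(quotcar a) y <-> smem S a (x - y).
Proof.
rewrite (rwP (smem_predP (x - y))) Quotient.idealrBE.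
by split=> /eqP.
Qed.

Lemma pi_quot_eq0 {a} (x : mcar M a) : \pi_(quotcar a) x = 0 <-> smem S a x.
Proof. by rewrite -(raddf0 \pi_(quotcar a)) pi_quot_eq subr0. Qed.

Lemma pi_act_repr {a b} (f : phom G a b) (x : mcar M b) :
  \pi_(quotcar a) (mact M f (repr (\pi_(quotcar b) x))) = \pi_(quotcar a) (mact M f x).
Proof. by apply/pi_quot_eq; rewrite -raddfB; apply/smem_act/pi_quot_eq; rewrite reprK. Qed.

Definition quotmod : Module G.
Proof.
refine (@Build_Module G quotcar
  (fun a b f q => \pi_(quotcar a) (mact M f (repr q))) _ _ _ _) => a.
- by move=> b f f' q; rewrite mactDf raddfD.
- move=> b f q q'.
  by rewrite -[q]reprK -[q']reprK -raddfD !pi_act_repr mactD raddfD.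
- by move=> q; rewrite mact1 reprK.
- by move=> b c f g q; rewrite mactM pi_act_repr.
Defined.

Definition quot_proj : ModMor M quotmod.
Proof.
refine (@Build_ModMor G M quotmod (fun a => \pi_(quotcar a)) _ _) => *.
  exact: raddfD.
by rewrite /= pi_act_repr.
Defined.

Lemma short_exact_sub_quot : short_exact sub_incl quot_proj.
Proof.
move=> a; split; first exact: sub_incl_inj.
split=> [q|x]; first by exists (repr q); rewrite /= reprK.
split=> [/pi_quot_eq0 Sx|[y <-]].
  by exists (SubElt a x (introT (smem_predP x) Sx)).
exact/pi_quot_eq0/smem_predP/valP.
Qed.

End SubQuot.

Section KernelImage.
Context {G : PreaddCat} {M N : Module G} (p : ModMor M N).

Definition kerS : submodule M.
Proof.
refine (Submodule (fun a x => mmap p a x = 0) _ _ _).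
- by move=> a; rewrite raddf0.
- by move=> a x y px0 py0; rewrite raddfB /= px0 py0 subrr.
- by move=> a b f x px0; rewrite mmapN px0 raddf0.
Defined.

Definition imS : submodule N.
Proof.
refine (Submodule (fun a y => exists x, mmap p a x = y) _ _ _).
- by move=> a; exists 0; rewrite raddf0.
- by move=> a _ _ [x <-] [x' <-]; exists (x - x'); rewrite raddfB.
- by move=> a b f _ [x <-]; exists (mact M f x); rewrite mmapN.
Defined.

Lemma short_exact_coker :
  (forall a, injective (mmap p a)) -> short_exact p (quot_proj imS).
Proof.
move=> p_inj a; split; first exact: p_inj.
split=> [q|y]; first by exists (repr q); rewrite /= reprK.
exact: (pi_quot_eq0 imS).
Qed.

Lemma im_subproof a (x : mcar M a) : mmap p a x \in smem_pred imS a.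
Proof. by apply/smem_predP; exists x. Qed.

Definition im_corestr : ModMor M (submod imS).
Proof.
refine (@Build_ModMor G M (submod imS)
  (fun a x => SubElt imS a _ (im_subproof a x)) _ _)
  => *; apply: val_inj; rewrite /= ?raddfD ?mmapN //.
Defined.

Lemma short_exact_ker_im : short_exact (sub_incl kerS) im_corestr.
Proof.
move=> a; split; first exact: sub_incl_inj.
split=> [y|x].
  by have /smem_predP[x px] := valP y; exists x; apply: val_inj.
split=> [/(congr1 val) /= px0 | [k <-]].
  by exists (SubElt kerS a x (introT (smem_predP kerS x) px0)).
by apply: val_inj; have /smem_predP := valP k.
Qed.

End KernelImage.

Lemma closed_wrt_trivial G (Lsub : Module G -> Prop) (X : Module G) :
  (forall L, Lsub L -> forall a (x : mcar L a), x = 0) -> closed_wrt Lsub X.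
Proof.
move=> Lsub0 L /Lsub0 L0; split=> [phi a x | E f g _].
  by rewrite (L0 a x) raddf0.
by exists (mor0 L E) => a x; rewrite /= raddf0 (L0 a x).
Qed.

Section Localization.
Context {G V : PreaddCat} {I : AddFunctor G V} {F : Module G -> Module V}
  {Fmap : forall M N : Module G, ModMor M N -> ModMor (F M) (F N)}
  {eta : forall M : Module G, ModMor M (restr I (F M))}.
Hypotheses (Hadj : is_left_adjoint I F Fmap eta) (Hexact : exact_functor F Fmap)
  (Hff : restr_fully_faithful I).
Implicit Types M N P K L : Module G.

Lemma Fmap_eta {M N} (f : ModMor M N) a x :
  mmap (Fmap M N f) (fobj I a) (mmap (eta M) a x) = mmap (eta N) a (mmap f a x).
Proof. by rewrite (proj1 Hadj). Qed.

(* [Fmap] is not assumed functorial: every identity between its values below comes from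
   this uniqueness property of the adjunction. *)
Lemma adj_mor_ext {M} {Y : Module V} (p p' : ModMor (F M) Y) :
  (forall a x,
     mmap p (fobj I a) (mmap (eta M) a x) = mmap p' (fobj I a) (mmap (eta M) a x)) ->
  forall b y, mmap p b y = mmap p' b y.
Proof.
move=> pp' b y.
have [psi [_ psi_uniq]] := proj2 Hadj M Y (mor_comp (eta M) (restr_mor I p)).
rewrite (psi_uniq p) // (psi_uniq p') // => a x.
exact/esym/pp'.
Qed.

Lemma Fmap0 {M N} (f : ModMor M N) :
  (forall a x, mmap f a x = 0) -> forall b y, mmap (Fmap M N f) b y = 0.
Proof.
move=> f0 b y; apply: (adj_mor_ext _ (mor0 _ _)) => a x.
by rewrite Fmap_eta f0 !raddf0.
Qed.

Lemma Fmap_comp {M N P} (f : ModMor M N) (g : ModMor N P) b y :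
  mmap (Fmap M P (mor_comp f g)) b y = mmap (Fmap N P g) b (mmap (Fmap M N f) b y).
Proof.
apply: (adj_mor_ext _ (mor_comp (Fmap M N f) (Fmap N P g))) => a x /=.
by rewrite !Fmap_eta.
Qed.

Lemma in_Ker_eta0 M : (forall a x, mmap (eta M) a x = 0) -> in_Ker F M.
Proof.
move=> eta0 b y; apply: (adj_mor_ext (mor_id _) (mor0 _ _)) => a x.
by rewrite /= eta0.
Qed.

Lemma in_Ker_restr_mor0 {L} {Y : Module V} (s : ModMor L (restr I Y)) :
  in_Ker F L -> forall a x, mmap s a x = 0.
Proof.
move=> L0 a x; have [psi [psi_s _]] := proj2 Hadj L Y s.
by rewrite -psi_s (L0 _ (mmap (eta L) a x)) raddf0.
Qed.

Lemma Fmap_short_exact {A B C} {f : ModMor A B} {g : ModMor B C} :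
  short_exact f g -> short_exact (Fmap A B f) (Fmap B C g).
Proof. exact: Hexact. Qed.

Lemma Fmap_inj {M N} {j : ModMor M N} :
  (forall a, injective (mmap j a)) -> forall b, injective (mmap (Fmap M N j) b).
Proof. by move=> j_inj b; case: (Fmap_short_exact (short_exact_coker j j_inj) b). Qed.

Lemma in_Ker_sub {M N} {j : ModMor M N} :
  (forall a, injective (mmap j a)) -> in_Ker F N -> in_Ker F M.
Proof.
move=> j_inj N0 b y; apply: (Fmap_inj j_inj b y 0).
by rewrite raddf0; apply: N0.
Qed.

Lemma Fmap_surj_in_Ker {M N P} {f : ModMor M N} {g : ModMor N P} :
  short_exact f g -> in_Ker F P -> forall b y, exists x, mmap (Fmap M N f) b x = y.
Proof.
move=> fg P0 b y; have [_ [_ exact_b]] := Fmap_short_exact fg b.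
exact/exact_b/P0.
Qed.

Lemma Fmap_quot_proj_surj {M} (S : submodule M) b (y : mcar (F (quotmod S)) b) :
  exists x, mmap (Fmap _ _ (quot_proj S)) b x = y.
Proof. by have [_ [surj _]] := Fmap_short_exact (short_exact_sub_quot S) b; exact: surj. Qed.

Lemma ker_eta_in_Ker M : in_Ker F (submod (kerS (eta M))).
Proof.
apply: in_Ker_eta0 => a k; apply: (Fmap_inj (sub_incl_inj _) (fobj I a) _ 0).
by rewrite Fmap_eta raddf0; have /smem_predP := valP k.
Qed.

Lemma eta_inj_of_closed {M} :
  closed_wrt (in_Ker F) M -> forall a, injective (mmap (eta M) a).
Proof.
move=> closedM a x x' etaxx'.
have Kxx' : x - x' \in smem_pred (kerS (eta M)) a.
  by apply/smem_predP; rewrite /= raddfB /= etaxx' subrr.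
have := proj1 (closedM _ (ker_eta_in_Ker M)) (sub_incl _) a (SubElt _ _ _ Kxx').
by move=> /eqP; rewrite subr_eq0 => /eqP.
Qed.

Lemma counit_iso (Y : Module V) : exists eps : ModMor (F (restr I Y)) Y,
  is_iso eps /\ forall a y, mmap eps (fobj I a) (mmap (eta (restr I Y)) a y) = y.
Proof.
have [eps [epsK _]] := proj2 Hadj (restr I Y) Y (mor_id _).
have [q qE] := proj2 (Hff Y (F (restr I Y))) (eta (restr I Y)).
exists eps; split=> //; exists q; split.
  by apply: (adj_mor_ext (mor_comp eps q) (mor_id _)) => a x /=; rewrite epsK qE.
by apply: (proj1 (Hff Y Y) (mor_comp q eps) (mor_id _)) => a x /=; rewrite qE epsK.
Qed.

Lemma Fmap_eta_surj {M} b (z : mcar (F (restr I (F M))) b) :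
  exists y, mmap (Fmap _ _ (eta M)) b y = z.
Proof.
have [eps [[q [qK epsK]] epsE]] := counit_iso (F M).
have eps_Feta y : mmap eps b (mmap (Fmap _ _ (eta M)) b y) = y.
  by apply: (adj_mor_ext (mor_comp (Fmap _ _ (eta M)) eps) (mor_id _)) => a x /=;
    rewrite Fmap_eta epsE.
by exists (mmap eps b z); rewrite -[LHS]qK eps_Feta qK.
Qed.

Lemma coker_eta_in_Ker M : in_Ker F (quotmod (imS (eta M))).
Proof.
move=> b z; have [y <-] := Fmap_quot_proj_surj _ b z.
have [w <-] := Fmap_eta_surj b y.
rewrite -Fmap_comp; apply: Fmap0 => a x /=.
by apply/(pi_quot_eq0 (imS (eta M))); exists x.
Qed.

Lemma eta_surj_of_closed {M} : closed_wrt (in_Ker F) M ->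
  forall a y, exists x, mmap (eta M) a x = y.
Proof.
move=> closedM a y; set C := quotmod (imS (eta M)).
have [_ ext] := closedM C (coker_eta_in_Ker M).
have [s sK] := ext _ _ _ (short_exact_coker _ (eta_inj_of_closed closedM)).
have C0 c (q : mcar C c) : q = 0.
  by rewrite -(sK c q) (in_Ker_restr_mor0 s (coker_eta_in_Ker M)) raddf0.
exact/(pi_quot_eq0 (imS (eta M)))/C0.
Qed.

Section RepresentablesSurjective.
Hypothesis eta_rep_surj :
  forall c b (y : mcar (restr I (F (representable c))) b), exists g, mmap (eta _) b g = y.

Lemma eta_image_act {M c c'} (v : phom V (fobj I c') (fobj I c)) (m : mcar M c) :
  exists m', mmap (eta M) c' m' = mact (F M) v (mmap (eta M) c m).
Proof.
(* Write [v] as [eta] of some [g : c' -> c], then transport along the Yoneda map of [m]. *)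
have [g etag] := eta_rep_surj c c' (mact _ v (mmap (eta (representable c)) c (pid G c))).
exists (mact M g m).
have -> : mact M g m = mmap (yoneda_mor m) c' g by [].
by rewrite -Fmap_eta etag mmapN Fmap_eta /= mact1.
Qed.

Definition eta_saturation {K M} (i : ModMor K M) : submodule (F M).
Proof.
refine (Submodule (fun b y => forall c (v : phom V (fobj I c) b),
  exists k, mmap (eta M) c (mmap i c k) = mact (F M) v y) _ _ _).
- by move=> b c v; exists 0; rewrite !raddf0.
- move=> b y y' Sy Sy' c v; have [k ek] := Sy c v; have [k' ek'] := Sy' c v.
  by exists (k - k'); rewrite !raddfB /= ek ek'.
- by move=> b b' w y Sy c v; rewrite -mactM; apply: Sy.
Defined.

Lemma Fmap_in_eta_saturation {K M} (i : ModMor K M) {b} (z : mcar (F K) b) :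
  smem (eta_saturation i) b (mmap (Fmap K M i) b z).
Proof.
apply/(pi_quot_eq0 (eta_saturation i)); move: b z.
apply: (adj_mor_ext (mor_comp (Fmap K M i) (quot_proj _)) (mor0 _ _)) => a k /=.
apply/(pi_quot_eq0 (eta_saturation i)) => c v; rewrite Fmap_eta.
have [k' ek'] := eta_image_act v k.
by exists k'; rewrite -Fmap_eta ek' mmapN Fmap_eta.
Qed.

End RepresentablesSurjective.

Lemma in_Ker_trivial : (forall g, closed_wrt (in_Ker F) (representable g)) ->
  forall L, in_Ker F L -> forall a (x : mcar L a), x = 0.
Proof.
move=> rep_closed L L0 a x; pose h := yoneda_mor x; set P := representable a.
have J0 : in_Ker F (submod (imS h)) := in_Ker_sub (sub_incl_inj _) L0.
have [z ez] := Fmap_surj_in_Ker (short_exact_ker_im h) J0 _ (mmap (eta P) a (pid G a)).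
have eta_rep_surj c := eta_surj_of_closed (rep_closed c).
have [k ek] := Fmap_in_eta_saturation eta_rep_surj (sub_incl _) z a (pid V (fobj I a)).
rewrite ez mact1 in ek.
have k_id : val k = pid G a := eta_inj_of_closed (rep_closed a) a _ _ ek.
by have /smem_predP /= := valP k; rewrite k_id mact1.
Qed.

End Localization.

Theorem lemma3p4 (G V : PreaddCat) (I : AddFunctor G V)
    (F : Module G -> Module V)
    (Fmap : forall M N : Module G, ModMor M N -> ModMor (F M) (F N))
    (eta : forall M : Module G, ModMor M (restr I (F M)))
    (Hadj : is_left_adjoint I F Fmap eta)
    (Hexact : exact_functor F Fmap)
    (Hff : restr_fully_faithful I) :
  adj_equivalence I F eta <->
  (forall g : pobj G, closed_wrt (in_Ker F) (representable g)).
Proof.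
split=> [[eta_iso _] g | rep_closed].
  apply: closed_wrt_trivial => L L0 a x; have [q [qK _]] := eta_iso L.
  by rewrite -(qK a x) (L0 _ (mmap (eta L) a x)) raddf0.
have all_closed M : closed_wrt (in_Ker F) M.
  exact/closed_wrt_trivial/(in_Ker_trivial Hadj Hexact Hff rep_closed).
split=> [M | Y]; last exact: counit_iso Hadj Hff Y.
exact: bij_iso (eta_inj_of_closed Hadj Hexact (all_closed M))
  (eta_surj_of_closed Hadj Hexact Hff (all_closed M)).
Qed.
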